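(* For any $x, y \in [0,1]$ and $\Delta_x, \Delta_y \in \mathbb{R}$, there exists a $1$-Lipschitz function $f : [0,1] \to [-1,1]$ such that $$f(x)\Delta_x + f(y)\Delta_y = \begin{cases} |\Delta_x| + |\Delta_y|, & \Delta_x\Delta_y \ge 0,\\ |\Delta_x + \Delta_y| + |x-y|\cdot\min\{|\Delta_x|, |\Delta_y|\}, & \Delta_x\Delta_y < 0.\end{cases}$$ *)

From Stdlib Require Import Reals.
Open Scope R_scope.

(* f : [0,1] -> [-1,1] is 1-Lipschitz; represented as a total function R -> R
   whose restriction to [0,1] has these properties. *)
Definition lip1_on_unit (f : R -> R) : Prop :=
  (forall u, 0 <= u <= 1 -> -1 <= f u <= 1) /\
  (forall u v, 0 <= u <= 1 -> 0 <= v <= 1 -> Rabs (f u - f v) <= Rabs (u - v)).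

Definition lemma15_rhs (x y dx dy : R) : R :=
  if Rle_dec 0 (dx * dy) then Rabs dx + Rabs dy
  else Rabs (dx + dy) + Rabs (x - y) * Rmin (Rabs dx) (Rabs dy).

(* Up to swapping the two points and negating both weights we may assume
   |dy| <= |dx| and dx >= 0.  If dy >= 0 the constant 1 attains |dx| + |dy|.
   Otherwise the tent u |-> 1 - |u - x| is 1 at x and 1 - |x - y| at y, which
   gives dx + dy + |x - y| (-dy) = |dx + dy| + |x - y| min(|dx|, |dy|). *)
From Stdlib Require Import Reals Lra.
Open Scope R_scope.

Lemma lip1_on_unit_const (s : R) : -1 <= s <= 1 -> lip1_on_unit (fun _ => s).
Proof.
  intros Hs; split; [intros; lra|].
  intros u v _ _. rewrite Rminus_diag, Rabs_R0. apply Rabs_pos.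
Qed.

Lemma lip1_on_unit_opp (f : R -> R) :
  lip1_on_unit f -> lip1_on_unit (fun u => - f u).
Proof.
  intros [Hrange Hlip]; split.
  - intros u Hu. specialize (Hrange u Hu). lra.
  - intros u v Hu Hv. replace (- f u - - f v) with (- (f u - f v)) by ring.
    rewrite Rabs_Ropp. auto.
Qed.

Lemma lip1_on_unit_tent (p : R) : 0 <= p <= 1 ->
  lip1_on_unit (fun u => 1 - Rabs (u - p)).
Proof.
  intros Hp; split.
  - intros u Hu. unfold Rabs; destruct Rcase_abs; lra.
  - intros u v _ _. unfold Rabs; repeat destruct Rcase_abs; lra.
Qed.

Lemma lemma15_rhs_sym (x y dx dy : R) :
  lemma15_rhs y x dy dx = lemma15_rhs x y dx dy.
Proof.
  unfold lemma15_rhs.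
  rewrite (Rmult_comm dy dx), (Rplus_comm dy dx), (Rabs_minus_sym y x),
    (Rmin_comm (Rabs dy)).
  destruct (Rle_dec 0 (dx * dy)); [apply Rplus_comm | reflexivity].
Qed.

Lemma lemma15_rhs_opp (x y dx dy : R) :
  lemma15_rhs x y (- dx) (- dy) = lemma15_rhs x y dx dy.
Proof.
  unfold lemma15_rhs.
  replace (- dx * - dy) with (dx * dy) by ring.
  replace (- dx + - dy) with (- (dx + dy)) by ring.
  now rewrite !Rabs_Ropp.
Qed.

Definition lemma15_attained (x y dx dy : R) : Prop :=
  exists f : R -> R, lip1_on_unit f /\
    f x * dx + f y * dy = lemma15_rhs x y dx dy.

Lemma lemma15_attained_sym (x y dx dy : R) :
  lemma15_attained x y dx dy -> lemma15_attained y x dy dx.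
Proof.
  intros [f [Hf Hval]]. exists f. split; [exact Hf|].
  rewrite lemma15_rhs_sym. lra.
Qed.

Lemma lemma15_attained_opp (x y dx dy : R) :
  lemma15_attained x y dx dy -> lemma15_attained x y (- dx) (- dy).
Proof.
  intros [f [Hf Hval]]. exists (fun u => - f u). split.
  - now apply lip1_on_unit_opp.
  - rewrite lemma15_rhs_opp. lra.
Qed.

Lemma lemma15_attained_nonneg (x y dx dy : R) :
  0 <= dx -> 0 <= dy -> lemma15_attained x y dx dy.
Proof.
  intros Hdx Hdy. exists (fun _ => 1). split; [apply lip1_on_unit_const; lra|].
  unfold lemma15_rhs. destruct (Rle_dec 0 (dx * dy)) as [_|Hneg].
  - rewrite !Rabs_pos_eq by lra. ring.
  - exfalso. apply Hneg, Rmult_le_pos; assumption.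
Qed.

Lemma lemma15_attained_opposite_sign (x y dx dy : R) :
  0 <= x <= 1 -> dy < 0 -> - dy <= dx -> lemma15_attained x y dx dy.
Proof.
  intros Hx Hdy Hle. exists (fun u => 1 - Rabs (u - x)).
  split; [now apply lip1_on_unit_tent|].
  unfold lemma15_rhs. destruct (Rle_dec 0 (dx * dy)) as [Hpos|_].
  - assert (dx * dy < 0) by (apply Rmult_pos_neg; lra). lra.
  - rewrite Rminus_diag, Rabs_R0, (Rabs_minus_sym y x).
    rewrite (Rabs_left dy), (Rabs_pos_eq dx), (Rabs_pos_eq (dx + dy)) by lra.
    rewrite Rmin_right by lra. ring.
Qed.

Lemma lemma15_attained_abs_le (x y dx dy : R) :
  0 <= x <= 1 -> Rabs dy <= Rabs dx -> lemma15_attained x y dx dy.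
Proof.
  intros Hx.
  enough (Hpos : forall a b, 0 <= a -> Rabs b <= Rabs a ->
                   lemma15_attained x y a b).
  { intros Hle. destruct (Rle_dec 0 dx) as [Hdx|Hdx]; [now apply Hpos|].
    rewrite <- (Ropp_involutive dx), <- (Ropp_involutive dy).
    apply lemma15_attained_opp, Hpos; [lra|]. now rewrite !Rabs_Ropp. }
  intros a b Ha Hle. rewrite (Rabs_pos_eq a Ha) in Hle.
  destruct (Rle_dec 0 b) as [Hb|Hb].
  - now apply lemma15_attained_nonneg.
  - rewrite Rabs_left in Hle by lra.
    apply lemma15_attained_opposite_sign; lra.
Qed.

Theorem lemma15 (x y dx dy : R) (hx : 0 <= x <= 1) (hy : 0 <= y <= 1) :
  exists f : R -> R, lip1_on_unit f /\
    f x * dx + f y * dy = lemma15_rhs x y dx dy.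
Proof.
  destruct (Rle_dec (Rabs dy) (Rabs dx)) as [Hle|Hgt].
  - now apply lemma15_attained_abs_le.
  - apply lemma15_attained_sym, lemma15_attained_abs_le; lra.
Qed.
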